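(* Let $G=(V,E)$ be a connected almost bipartite permutation graph that contains a hole, let $C$ be a shortest hole, $m=|C|$, $c_0,\dots,c_{m-1}$ its vertices in cyclic order (indices modulo $m$), and for each $i$ let $A_i=\{v\in V: N(v)\cap C=\{c_{i-1},c_{i+1}\}\}$ and $B_i=\{v\in V: N(v)\cap C=\{c_i\}\}$ (indices modulo $m$). Let $i\in\{0,\dots,m-1\}$ and let $(p,q)\in\{(i-2,i-1),(i+2,i+1)\}$. Then: (1) For every $w,w'\in B_p\cup A_q$ the sets $N(w)\cap A_i$ and $N(w')\cap A_i$ are comparable with respect to inclusion; moreover, if $w\in B_p$ and $w'\in A_q$, then $N(w)\cap A_i\subseteq N(w')\cap A_i$. (2) For every $u,u'\in A_p\cup B_q$ the sets $N(u)\cap B_i$ and $N(u')\cap B_i$ are comparable with respect to inclusion; moreover, if $u\in A_p$ and $u'\in B_q$, then $N(u)\cap B_i\subseteq N(u')\cap B_i$.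
   Context: All graphs are finite, simple, undirected; $N(v)$ is the open neighborhood of $v$. A hole is an induced cycle on at least five vertices. $K_3$ is the triangle, $C_k$ the cycle on $k$ vertices. $T_2$ is the tree on 7 vertices obtained from the claw $K_{1,3}$ by subdividing each edge once. $X_2$ is the 7-vertex graph obtained from a 4-cycle by attaching one new pendant vertex to each of three of its four vertices. $X_3$ is the 7-vertex graph obtained from the domino (two 4-cycles sharing exactly one edge) by attaching one new pendant vertex to one endpoint of the shared edge. A graph is an almost bipartite permutation graph if it contains none of $T_2, X_2, X_3, K_3, C_5,\dots,C_9$ as an induced subgraph. *)

From mathcomp Require Import all_boot.
Set Implicit Arguments. Unset Strict Implicit. Unset Printing Implicit Defensive.

(* A finite simple graph: vertex type T : finType, adjacency e : rel T,
   assumed symmetric and irreflexive in the theorem. *)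

Definition mkgraph {n : nat} (s : seq (nat * nat)) : rel 'I_n :=
  fun x y => ((nat_of_ord x, nat_of_ord y) \in s) || ((nat_of_ord y, nat_of_ord x) \in s).

Definition contains_induced (T : finType) (e : rel T) (n : nat) (h : rel 'I_n) : Prop :=
  exists f : 'I_n -> T, injective f /\ forall x y, e (f x) (f y) = h x y.

Definition cycle_graph (k : nat) : rel 'I_k :=
  fun x y => (nat_of_ord y == (x.+1 %% k)) || (nat_of_ord x == (y.+1 %% k)).

Definition K3 : rel 'I_3 := mkgraph [:: (0,1); (1,2); (0,2)].
(* T2: claw with center 0, each edge subdivided once. *)
Definition T2 : rel 'I_7 := mkgraph [:: (0,1); (0,2); (0,3); (1,4); (2,5); (3,6)].
(* X2: 4-cycle 0-1-2-3-0 with pendants 4,5,6 at 0,1,2. *)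
Definition X2 : rel 'I_7 :=
  mkgraph [:: (0,1); (1,2); (2,3); (3,0); (0,4); (1,5); (2,6)].
(* X3: domino (2x3 grid 0-1-2 / 3-4-5, shared edge 1-4) with a pendant 6 at 1. *)
Definition X3 : rel 'I_7 :=
  mkgraph [:: (0,1); (1,2); (3,4); (4,5); (0,3); (1,4); (2,5); (1,6)].

Definition almost_bip_perm (T : finType) (e : rel T) : Prop :=
  ~ contains_induced e T2 /\ ~ contains_induced e X2 /\ ~ contains_induced e X3 /\
  ~ contains_induced e K3 /\
  (forall k, 5 <= k <= 9 -> ~ contains_induced e (@cycle_graph k)).

Definition connected_graph (T : finType) (e : rel T) : Prop :=
  forall x y : T, connect e x y.

Definition is_hole (T : finType) (e : rel T) (k : nat) (c : nat -> T) : Prop :=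
  5 <= k /\
  (forall i j, i < k -> j < k -> c i = c j -> i = j) /\
  (forall i j, i < k -> j < k ->
     e (c i) (c j) = (j == i.+1 %% k) || (i == j.+1 %% k)).

Definition shortest_hole (T : finType) (e : rel T) (m : nat) (c : nat -> T) : Prop :=
  is_hole e m c /\ forall k c', is_hole e k c' -> m <= k.

Definition nbhd (T : finType) (e : rel T) (v : T) : {set T} := [set w | e v w].

Definition holeset (T : finType) (m : nat) (c : nat -> T) : {set T} :=
  [set c (nat_of_ord j) | j : 'I_m].

Definition Aset (T : finType) (e : rel T) (m : nat) (c : nat -> T) (i : nat) : {set T} :=
  [set v | nbhd e v :&: holeset m c == [set c ((i + m - 1) %% m); c ((i + 1) %% m)]].

Definition Bset (T : finType) (e : rel T) (m : nat) (c : nat -> T) (i : nat) : {set T} :=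
  [set v | nbhd e v :&: holeset m c == [set c (i %% m)]].

From mathcomp Require Import all_boot zify.
Set Implicit Arguments. Unset Strict Implicit. Unset Printing Implicit Defensive.

(* Since C5, ..., C9 are excluded, every hole has length at least 10, so five
   consecutive hole vertices d0, ..., d4 induce a path, and a vertex of A_j or B_j
   is adjacent to exactly the prescribed ones among them.  Up to reflecting the
   hole, (i, p, q) is (3, 1, 2) in such a window.  If two neighbourhoods were
   incomparable, or the claimed inclusion failed, the two witnesses together with
   window vertices would induce a C6 (part 1), an X3 (comparability in part 2) or
   an X2 (inclusion in part 2); triangle-freeness forbids the remaining chords. *)

(* Pattern graphs are handled through relations on nat, on which [twin_free]
   evaluates by computation; [mkgraph s] is convertible to
   [fun x y => nat_graph s x y]. *)
Definition nat_graph (s : seq (nat * nat)) (a b : nat) : bool :=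
  ((a, b) \in s) || ((b, a) \in s).

Definition twin_free n (h : nat -> nat -> bool) : bool :=
  all (fun a => all (fun b => [|| a == b, h a b | has (fun c => h a c != h b c) (iota 0 n)])
    (iota 0 n)) (iota 0 n).

Section InducedPatterns.
Variables (T : finType) (e : rel T).
Hypotheses (e_sym : symmetric e) (e_irr : irreflexive e).

Lemma contains_induced_nth n (h : nat -> nat -> bool) (l : seq T) x0 :
  twin_free n h -> (forall a b, a < n -> b < n -> e (nth x0 l a) (nth x0 l b) = h a b) ->
  contains_induced e (fun x y : 'I_n => h x y).
Proof.
move=> /allP h_tf el; exists (fun x => nth x0 l x); split=> [x y eq_xy|x y]; last exact: el.
have mem_iota_ord (z : 'I_n) : nat_of_ord z \in iota 0 n by rewrite mem_iota /=.
have := allP (h_tf x (mem_iota_ord x)) y (mem_iota_ord y).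
case: eqP => [/val_inj //|_] /=.
rewrite -el // eq_xy e_irr => /hasP[z]; rewrite mem_iota => /= z_lt_n.
by rewrite -!el // eq_xy eqxx.
Qed.

Ltac induced_pairs :=
  move=> [|[|[|[|[|[|[|a]]]]]]] [|[|[|[|[|[|[|b]]]]]]] // _ _;
  match goal with |- _ = ?r => let r' := eval vm_compute in r in change r with r' end;
  rewrite /= ?e_irr //;
  first [done | by rewrite e_sym | by apply/negbTE | by rewrite e_sym; apply/negbTE].

Lemma induced_K3 x y z : e x y -> e y z -> e x z -> contains_induced e K3.
Proof.
move=> *; apply: (@contains_induced_nth _ (nat_graph _) [:: x; y; z] x) => //.
induced_pairs.
Qed.

Lemma induced_C6 x0 x1 x2 x3 x4 x5 :
  e x0 x1 -> e x1 x2 -> e x2 x3 -> e x3 x4 -> e x4 x5 -> e x5 x0 ->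
  ~~ e x0 x2 -> ~~ e x0 x3 -> ~~ e x0 x4 -> ~~ e x1 x3 -> ~~ e x1 x4 ->
  ~~ e x1 x5 -> ~~ e x2 x4 -> ~~ e x2 x5 -> ~~ e x3 x5 ->
  contains_induced e (@cycle_graph 6).
Proof.
move=> *; apply: (@contains_induced_nth _ (fun a b => (b == a.+1 %% 6) || (a == b.+1 %% 6))
  [:: x0; x1; x2; x3; x4; x5] x0) => //.
induced_pairs.
Qed.

Lemma induced_X2 x0 x1 x2 x3 x4 x5 x6 :
  e x0 x1 -> e x1 x2 -> e x2 x3 -> e x3 x0 -> e x0 x4 -> e x1 x5 -> e x2 x6 ->
  ~~ e x0 x2 -> ~~ e x0 x5 -> ~~ e x0 x6 -> ~~ e x1 x3 -> ~~ e x1 x4 -> ~~ e x1 x6 ->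
  ~~ e x2 x4 -> ~~ e x2 x5 -> ~~ e x3 x4 -> ~~ e x3 x5 -> ~~ e x3 x6 ->
  ~~ e x4 x5 -> ~~ e x4 x6 -> ~~ e x5 x6 ->
  contains_induced e X2.
Proof.
move=> *; apply: (@contains_induced_nth _ (nat_graph _) [:: x0; x1; x2; x3; x4; x5; x6] x0) => //.
induced_pairs.
Qed.

Lemma induced_X3 x0 x1 x2 x3 x4 x5 x6 :
  e x0 x1 -> e x1 x2 -> e x3 x4 -> e x4 x5 -> e x0 x3 -> e x1 x4 -> e x2 x5 -> e x1 x6 ->
  ~~ e x0 x2 -> ~~ e x0 x4 -> ~~ e x0 x5 -> ~~ e x0 x6 -> ~~ e x1 x3 -> ~~ e x1 x5 ->
  ~~ e x2 x3 -> ~~ e x2 x4 -> ~~ e x2 x6 -> ~~ e x3 x5 -> ~~ e x3 x6 ->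
  ~~ e x4 x6 -> ~~ e x5 x6 ->
  contains_induced e X3.
Proof.
move=> *; apply: (@contains_induced_nth _ (nat_graph _) [:: x0; x1; x2; x3; x4; x5; x6] x0) => //.
induced_pairs.
Qed.
End InducedPatterns.

Section ForbiddenPatterns.
Variables (T : finType) (e : rel T).
Hypotheses (e_sym : symmetric e) (e_irr : irreflexive e).
Hypothesis K3_free : ~ contains_induced e K3.

Lemma common_nbr_nadj x y z : e x z -> e y z -> ~~ e x y.
Proof.
move=> xz yz; apply/negP => xy; apply: K3_free.
exact: (induced_K3 e_sym e_irr xy yz xz).
Qed.

Lemma C6_free_nbhd_chain x y (W S : {set T}) :
  ~ contains_induced e (@cycle_graph 6) -> ~~ e x y ->
  {in W, forall w, e w x && ~~ e w y} -> {in S, forall a, e a y && ~~ e a x} ->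
  {in W &, forall w w', (nbhd e w :&: S \subset nbhd e w' :&: S) ||
                        (nbhd e w' :&: S \subset nbhd e w :&: S)}.
Proof.
move=> C6_free nxy W_nbr S_nbr w w' /W_nbr/andP[wx nwy] /W_nbr/andP[w'x nw'y].
case: (boolP (_ \subset _)) => //= /subsetPn[a]; rewrite !inE => /andP[wa aS].
rewrite aS andbT => nw'a; apply/subsetP => a'; rewrite !inE => /andP[w'a' a'S].
rewrite a'S andbT; apply/negPn/negP => nwa'.
have /andP[ay nax] := S_nbr a aS; have /andP[a'y na'x] := S_nbr a' a'S.
have nww' := common_nbr_nadj wx w'x; have naa' := common_nbr_nadj ay a'y.
apply: C6_free; apply: (induced_C6 e_sym e_irr (x0 := w) (x1 := a) (x2 := y) (x3 := a')
                                 (x4 := w') (x5 := x));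
  by rewrite // e_sym.
Qed.

Lemma C6_free_nbhd_sub x y z (W W' S : {set T}) :
  ~ contains_induced e (@cycle_graph 6) -> e z y -> ~~ e x z -> ~~ e x y ->
  {in W, forall w, [&& e w x, ~~ e w z & ~~ e w y]} ->
  {in W', forall w', [&& e w' x, e w' z & ~~ e w' y]} ->
  {in S, forall a, [&& e a y, ~~ e a x & ~~ e a z]} ->
  {in W & W', forall w w', nbhd e w :&: S \subset nbhd e w' :&: S}.
Proof.
move=> C6_free zy nxz nxy W_nbr W'_nbr S_nbr w w'.
move=> /W_nbr/and3P[wx nwz nwy] /W'_nbr/and3P[w'x w'z nw'y].
apply/subsetP => a; rewrite !inE => /andP[wa aS]; rewrite aS andbT.
apply/negPn/negP => nw'a.
have /and3P[ay nax naz] := S_nbr a aS.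
have nww' := common_nbr_nadj wx w'x.
apply: C6_free; apply: (induced_C6 e_sym e_irr (x0 := w) (x1 := a) (x2 := y) (x3 := z)
                                 (x4 := w') (x5 := x));
  by rewrite // e_sym.
Qed.

Lemma X3_free_nbhd_chain x y z (U S : {set T}) :
  ~ contains_induced e X3 -> e x y -> e y z -> ~~ e x z ->
  {in U, forall u, [&& e u x, ~~ e u y & ~~ e u z]} ->
  {in S, forall b, [&& e b y, ~~ e b x & ~~ e b z]} ->
  {in U &, forall u u', (nbhd e u :&: S \subset nbhd e u' :&: S) ||
                        (nbhd e u' :&: S \subset nbhd e u :&: S)}.
Proof.
move=> X3_free xy yz nxz U_nbr S_nbr u u'.
move=> /U_nbr/and3P[ux nuy nuz] /U_nbr/and3P[u'x nu'y nu'z].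
case: (boolP (_ \subset _)) => //= /subsetPn[b]; rewrite !inE => /andP[ub bS].
rewrite bS andbT => nu'b; apply/subsetP => b'; rewrite !inE => /andP[u'b' b'S].
rewrite b'S andbT; apply/negPn/negP => nub'.
have /and3P[by_ nbx nbz] := S_nbr b bS; have /and3P[b'y nb'x nb'z] := S_nbr b' b'S.
have nuu' := common_nbr_nadj ux u'x; have nbb' := common_nbr_nadj by_ b'y.
apply: X3_free; apply: (induced_X3 e_sym e_irr (x0 := b) (x1 := y) (x2 := b') (x3 := u)
                                 (x4 := x) (x5 := u') (x6 := z));
  by rewrite // e_sym.
Qed.

Lemma X2_free_nbhd_sub v x y z (U U' S : {set T}) :
  ~ contains_induced e X2 -> e x y -> e y z -> ~~ e x z ->
  ~~ e v x -> ~~ e v y -> ~~ e v z ->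
  {in U, forall u, [&& e u v, e u x, ~~ e u y & ~~ e u z]} ->
  {in U', forall u', [&& e u' x, ~~ e u' v, ~~ e u' y & ~~ e u' z]} ->
  {in S, forall b, [&& e b y, ~~ e b v, ~~ e b x & ~~ e b z]} ->
  {in U & U', forall u u', nbhd e u :&: S \subset nbhd e u' :&: S}.
Proof.
move=> X2_free xy yz nxz nvx nvy nvz U_nbr U'_nbr S_nbr u u'.
move=> /U_nbr/and4P[uv ux nuy nuz] /U'_nbr/and4P[u'x nu'v nu'y nu'z].
apply/subsetP => b; rewrite !inE => /andP[ub bS]; rewrite bS andbT.
apply/negPn/negP => nu'b.
have /and4P[by_ nbv nbx nbz] := S_nbr b bS.
have nuu' := common_nbr_nadj ux u'x.
apply: X2_free; apply: (induced_X2 e_sym e_irr (x0 := u) (x1 := x) (x2 := y) (x3 := b)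
                                 (x4 := v) (x5 := u') (x6 := z));
  by rewrite // e_sym.
Qed.
End ForbiddenPatterns.

(* [d 0], ..., [d 4] stand for consecutive hole vertices and [A t], [B t] for the
   sets A and B at [d t], seen only through their adjacency to the window. *)
Definition hole_window (T : finType) (e : rel T) (d : nat -> T) (A B : nat -> {set T}) : Prop :=
  [/\ forall t s, t <= 4 -> s <= 4 -> e (d t) (d s) = (s == t.+1) || (t == s.+1),
      forall t v s, 0 < t < 4 -> v \in A t -> s <= 4 -> e v (d s) = (s == t.-1) || (s == t.+1)
    & forall t v s, t <= 4 -> v \in B t -> s <= 4 -> e v (d s) = (s == t)].

Lemma hole_window_rev (T : finType) (e : rel T) (d : nat -> T) (A B : nat -> {set T}) :
  hole_window e d A B ->
  hole_window e (fun t => d (4 - t)) (fun t => A (4 - t)) (fun t => B (4 - t)).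
Proof.
case=> d_adj A_adj B_adj; split=> [t s t4 s4 | t v s t_in v_in s4 | t v s t4 v_in s4].
- rewrite d_adj ?leq_subr //; lia.
- rewrite (A_adj _ _ _ _ v_in) ?leq_subr //; lia.
- rewrite (B_adj _ _ _ _ v_in) ?leq_subr //; lia.
Qed.

Lemma hole_window_nbhd_claims (T : finType) (e : rel T) (d : nat -> T) (A B : nat -> {set T}) :
  symmetric e -> irreflexive e -> almost_bip_perm e -> hole_window e d A B ->
  ((forall w w', w \in B 1 :|: A 2 -> w' \in B 1 :|: A 2 ->
      (nbhd e w :&: A 3 \subset nbhd e w' :&: A 3) ||
      (nbhd e w' :&: A 3 \subset nbhd e w :&: A 3)) /\
   (forall w w', w \in B 1 -> w' \in A 2 ->
      nbhd e w :&: A 3 \subset nbhd e w' :&: A 3)) /\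
  ((forall u u', u \in A 1 :|: B 2 -> u' \in A 1 :|: B 2 ->
      (nbhd e u :&: B 3 \subset nbhd e u' :&: B 3) ||
      (nbhd e u' :&: B 3 \subset nbhd e u :&: B 3)) /\
   (forall u u', u \in A 1 -> u' \in B 2 ->
      nbhd e u :&: B 3 \subset nbhd e u' :&: B 3)).
Proof.
move=> e_sym e_irr [_ [X2_free [X3_free [K3_free C_free]]]] [d_adj A_adj B_adj].
have C6_free := C_free 6 isT.
split; split; [
  apply: (C6_free_nbhd_chain e_sym e_irr K3_free (x := d 1) (y := d 4)) |
  apply: (C6_free_nbhd_sub e_sym e_irr K3_free (x := d 1) (y := d 4) (z := d 3)) |
  apply: (X3_free_nbhd_chain e_sym e_irr K3_free (x := d 2) (y := d 3) (z := d 4)) |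
  apply: (X2_free_nbhd_sub e_sym e_irr K3_free (v := d 0) (x := d 2) (y := d 3) (z := d 4))] => //.
all: first [ by rewrite d_adj
           | by move=> v Hv; rewrite ?(A_adj _ _ _ _ Hv) ?(B_adj _ _ _ _ Hv)
           | by move=> v /setUP[] Hv; rewrite ?(A_adj _ _ _ _ Hv) ?(B_adj _ _ _ _ Hv) ].
Qed.

Lemma eqn_modDl_small m k s t : s < m -> t < m -> (k + s == k + t %[mod m]) = (s == t).
Proof. by move=> s_lt t_lt; rewrite eqn_modDl !modn_small. Qed.

Lemma modn_predD m a : 0 < m -> 0 < a -> (a %% m + m - 1) %% m = a.-1 %% m.
Proof.
move=> m_gt0 a_gt0; rewrite -addnBA // modnDml.
by rewrite (_ : a + (m - 1) = a.-1 + m) ?modnDr //; lia.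
Qed.

Section Hole.
Variables (T : finType) (e : rel T) (m : nat) (c : nat -> T).
Hypothesis c_hole : is_hole e m c.

Let m_gt0 : 0 < m.
Proof. by case: c_hole => /(leq_trans _)->. Qed.

Lemma hole_contains_cycle : contains_induced e (@cycle_graph m).
Proof.
case: c_hole => _ [c_inj c_adj]; exists (fun x : 'I_m => c x); split.
  by move=> x y /c_inj => /(_ (ltn_ord x) (ltn_ord y)) /val_inj.
by move=> x y; rewrite c_adj.
Qed.

Lemma hole_length_gt9 : almost_bip_perm e -> 9 < m.
Proof.
case=> [_ [_ [_ [_ C_free]]]]; case: (leqP 10 m) => // m_lt10; exfalso.
case: c_hole => m_ge5 _; apply: (C_free m); first by rewrite m_ge5.
exact: hole_contains_cycle.
Qed.

Lemma eq_hole_mod a b : (c (a %% m) == c (b %% m)) = (a == b %[mod m]).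
Proof.
case: c_hole => _ [c_inj _]; apply/eqP/eqP => [/c_inj|->] //; apply; exact: ltn_pmod.
Qed.

Lemma adj_hole_mod v a : e v (c (a %% m)) = (c (a %% m) \in nbhd e v :&: holeset m c).
Proof.
suff c_in : c (a %% m) \in holeset m c by rewrite inE c_in andbT inE.
by apply/imsetP; exists (Ordinal (ltn_pmod a m_gt0)).
Qed.

Hypothesis m_ge6 : 6 <= m.

Lemma hole_window_at K :
  hole_window e (fun t => c ((K + t) %% m))
    (fun t => Aset e m c ((K + t) %% m)) (fun t => Bset e m c ((K + t) %% m)).
Proof.
split=> [t s t4 s4 | t v s /andP[t_gt0 t_lt4] | t v s t4].
- case: c_hole => _ [_ c_adj]; rewrite c_adj ?ltn_pmod //.
  rewrite -!(addn1 (_ %% m)) !modnDml -!addnA !addn1 !eqn_modDl_small //; lia.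
- rewrite inE => /eqP v_nbr s4; rewrite adj_hole_mod v_nbr !inE modn_predD //; last by lia.
  rewrite modnDml -addnA addn1 (_ : (K + t).-1 = K + t.-1); last by lia.
  by rewrite !eq_hole_mod !eqn_modDl_small //; lia.
- rewrite inE => /eqP v_nbr s4; rewrite adj_hole_mod v_nbr !inE modn_mod.
  by rewrite eq_hole_mod eqn_modDl_small //; lia.
Qed.
End Hole.

Theorem proposition3p6 (T : finType) (e : rel T) :
  symmetric e -> irreflexive e ->
  connected_graph e -> almost_bip_perm e ->
  forall (m : nat) (c : nat -> T), shortest_hole e m c ->
  forall i p q : nat, i < m ->
  ((p, q) = ((i + m - 2) %% m, (i + m - 1) %% m) \/ (p, q) = ((i + 2) %% m, (i + 1) %% m)) ->
  ((forall w w', w \in Bset e m c p :|: Aset e m c q -> w' \in Bset e m c p :|: Aset e m c q ->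
      (nbhd e w :&: Aset e m c i \subset nbhd e w' :&: Aset e m c i) ||
      (nbhd e w' :&: Aset e m c i \subset nbhd e w :&: Aset e m c i)) /\
   (forall w w', w \in Bset e m c p -> w' \in Aset e m c q ->
      nbhd e w :&: Aset e m c i \subset nbhd e w' :&: Aset e m c i)) /\
  ((forall u u', u \in Aset e m c p :|: Bset e m c q -> u' \in Aset e m c p :|: Bset e m c q ->
      (nbhd e u :&: Bset e m c i \subset nbhd e u' :&: Bset e m c i) ||
      (nbhd e u' :&: Bset e m c i \subset nbhd e u :&: Bset e m c i)) /\
   (forall u u', u \in Aset e m c p -> u' \in Bset e m c q ->
      nbhd e u :&: Bset e m c i \subset nbhd e u' :&: Bset e m c i)).
Proof.
move=> e_sym e_irr _ abp m c [c_hole _] i p q i_lt_m pq.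
have m_ge6 : 6 <= m by have := hole_length_gt9 c_hole abp; lia.
have claims_at := hole_window_nbhd_claims e_sym e_irr abp.
case: pq => [[-> ->] | [-> ->]].
- move: (claims_at _ _ _ (hole_window_at c_hole m_ge6 (i + m - 3))) => /=.
  have E1 : i + m - 3 + 1 = i + m - 2 by lia.
  have E2 : i + m - 3 + 2 = i + m - 1 by lia.
  have E3 : i + m - 3 + 3 = i + m by lia.
  by rewrite E1 E2 E3 modnDr (modn_small i_lt_m).
- move: (claims_at _ _ _ (hole_window_rev (hole_window_at c_hole m_ge6 (i + m - 1)))) => /=.
  have E1 : i + m - 1 + 3 = i + 2 + m by lia.
  have E2 : i + m - 1 + 2 = i + 1 + m by lia.
  have E3 : i + m - 1 + 1 = i + m by lia.
  by rewrite E1 E2 E3 !modnDr (modn_small i_lt_m).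
Qed.
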